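(* Let $\Delta$ be a quasi-tree on $[n]$ of dimension $d-1$, and let $\ell$ be a nonnegative integer with $\ell\leq d-1$. Let $I\subset S=K[x_1,\ldots,x_n]$ ($K$ a field) be the ideal generated by all monomials $x_F=\prod_{i\in F}x_i$ where $F$ ranges over the $(\ell+1)$-element subsets of $[n]$ with $F\notin\Delta$ (the facet ideal of $\overline{\mathrm{skel}_\Delta(\ell)}$). Then $I$ has linear quotients. In particular, $I$ has a linear resolution.
   Context: A simplicial complex on $[n]$ is a collection of subsets of $[n]$ containing all singletons and closed under taking subsets; facets are maximal faces. A facet $F$ is a leaf if either it is the only facet, or there is a facet $G\neq F$ with $H\cap F\subseteq G\cap F$ for every facet $H\neq F$. $\Delta$ is a quasi-tree if its facets can be labeled $F_1,\ldots,F_m$ so that each $F_i$ is a leaf of the complex generated by $F_1,\ldots,F_i$. $\mathrm{skel}_\Delta(\ell)$ is the complex whose facets are the $\ell$-dimensional faces of $\Delta$; for a pure $(e-1)$-dimensional complex $\Gamma$, $\bar\Gamma$ is generated by the $e$-subsets of $[n]$ not in $\Gamma$. A monomial ideal $I$ has linear quotients if its minimal monomial generators can be ordered $f_1,\ldots,f_m$ such that for every $i>1$ the colon ideal $(f_1,\ldots,f_{i-1}):f_i$ is generated by variables. A graded ideal generated in degree $q$ has a linear resolution if the $i$-th module of its minimal graded free resolution is generated in degree $q+i$ for all $i$. *)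

From HB Require Import structures.
From mathcomp Require Import all_boot all_order all_algebra.
From mathcomp Require Import mpoly.
Set Implicit Arguments. Unset Strict Implicit. Unset Printing Implicit Defensive.
Import GRing.Theory.
Local Open Scope ring_scope.

Definition simplicial_complex (n : nat) (D : {set {set 'I_n}}) : Prop :=
  (forall i : 'I_n, [set i] \in D) /\
  (forall F G : {set 'I_n}, F \in D -> G \subset F -> G \in D).

Definition facets (n : nat) (D : {set {set 'I_n}}) : {set {set 'I_n}} :=
  [set F in D | [forall G in D, (F \subset G) ==> (G == F)]].

(** dimension d-1 : maximal face cardinality is d *)
Definition max_face_card (n : nat) (D : {set {set 'I_n}}) : nat :=
  \max_(F in D) #|F|.

Definition is_leaf (n : nat) (Fs : {set {set 'I_n}}) (F : {set 'I_n}) : Prop :=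
  F \in Fs /\
  (Fs = [set F] \/
   exists2 G, (G \in Fs) /\ G != F &
     forall H, H \in Fs -> H != F -> H :&: F \subset G :&: F).

Definition gen_facets (n : nat) (Fs : {set {set 'I_n}}) : {set {set 'I_n}} :=
  [set F in Fs | [forall G in Fs, (F \subset G) ==> (G == F)]].

Definition quasi_tree (n : nat) (D : {set {set 'I_n}}) : Prop :=
  exists s : seq {set 'I_n},
    [/\ uniq s,
        (forall F, F \in s <-> F \in facets D) &
        forall i, (i < size s)%N ->
          is_leaf (gen_facets [set F in take i.+1 s]) (nth set0 s i)].

Definition xmon (K : fieldType) (n : nat) (F : {set 'I_n}) : {mpoly K[n]} :=
  \prod_(i in F) 'X_i.

Definition in_ideal (R : comNzRingType) (G : seq R) (p : R) : Prop :=
  exists c : seq R, size c = size G /\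
    p = \sum_(j < size G) c`_j * G`_j.

Definition linear_quotients_order (K : fieldType) (n : nat)
    (gs : seq {mpoly K[n]}) : Prop :=
  forall i, (0 < i < size gs)%N ->
    exists V : seq 'I_n, forall g : {mpoly K[n]},
      in_ideal (take i gs) (g * gs`_i) <->
      in_ideal [seq 'X_j | j <- V] g.

(* Every nonempty vertex set U of a quasi-tree contains a vertex w whose faces
   inside U all lie in one facet: take the last facet F in the leaf order that
   meets U; a vertex of U in F but outside the branch of F works, and if there is
   none, F meets U only inside its branch and can be discarded.  Hence the faces
   inside U through w are closed under union.
   The (l+1)-subsets of U that are non-faces are then ordered recursively: first
   w |: B for the l-subsets B of U :\ w with w |: B a non-face, then the
   non-faces avoiding w.  For a non-face A avoiding w, some w |: (A :\ x) is a
   non-face (were they all faces, two of them would have the face w |: A as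
   union), and it is the earlier generator putting x_w into the colon ideal.
   Along this order every earlier generator is divisible by a variable x_k of
   the colon ideal, and the colon ideals are exactly generated by these
   variables, as seen by substituting 0 for them. *)

From HB Require Import structures.
From mathcomp Require Import all_boot all_order all_algebra.
From mathcomp Require Import mpoly.
From mathcomp Require Import ring.

Set Implicit Arguments.
Unset Strict Implicit.
Unset Printing Implicit Defensive.

Section QuasiTree.

Variable n : nat.
Implicit Types (A B C F G U : {set 'I_n}) (D Fs : {set {set 'I_n}}) (s : seq {set 'I_n}).

Lemma face_sub_facet D A : A \in D -> exists2 F, F \in facets D & A \subset F.
Proof.
move=> AD; have [F /maxsetP[FD Fmax] AF] := maxset_exists (P := fun X => X \in D) AD.
exists F => //; rewrite inE FD; apply/forall_inP => G GD.
by apply/implyP => FG; apply/eqP; apply: Fmax.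
Qed.

Lemma facets_antichain D F G : F \in facets D -> G \in facets D -> F \subset G -> G = F.
Proof.
by rewrite !inE => /andP[_ /forall_inP Fmax] /andP[GD _] FG; apply/eqP/(implyP (Fmax G GD)).
Qed.

Lemma gen_facets_antichain Fs :
  {in Fs &, forall F G, F \subset G -> G = F} -> gen_facets Fs = Fs.
Proof.
move=> anti; apply/setP => F; rewrite inE andb_idr // => FFs.
by apply/forall_inP => G GFs; apply/implyP => FG; apply/eqP/anti.
Qed.

Definition leaf_order s :=
  forall i, (i < size s)%N -> is_leaf [set F in take i.+1 s] (nth set0 s i).

Lemma quasi_tree_leaf_order D :
  quasi_tree D -> exists2 s, (forall F, F \in s <-> F \in facets D) & leaf_order s.
Proof.
move=> [s [_ sD leaf]]; exists s => // i lt_is.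
rewrite -[X in is_leaf X]gen_facets_antichain; first exact: leaf.
move=> F G; rewrite !inE => /mem_take/sD FD /mem_take/sD GD.
exact: facets_antichain FD GD.
Qed.

Lemma leaf_order_rcons s F :
  leaf_order (rcons s F) -> leaf_order s /\ is_leaf [set G in rcons s F] F.
Proof.
move=> leaf; split=> [i lt_is|].
  have := leaf i; rewrite size_rcons ltnS nth_rcons lt_is -cats1 takel_cat //.
  by apply; apply: ltnW.
have := leaf (size s); rewrite size_rcons ltnSn nth_rcons ltnn eqxx.
by rewrite take_oversize ?size_rcons //; apply.
Qed.

Definition free_vertex_in s U w :=
  exists2 F0, F0 \in s & forall F, F \in s -> w \in F -> U :&: F \subset F0.

Lemma leaf_order_free_vertex s U :
  leaf_order s -> U != set0 -> (forall u, u \in U -> exists2 F, F \in s & u \in F) ->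
  exists2 w, w \in U & free_vertex_in s U w.
Proof.
elim/last_ind: s U => [|s Fc IH] U leaf U0 cover; first by case/set0Pn: U0 => u /cover[].
have [/IH {}IH [_ leafFc]] := leaf_order_rcons leaf.
have in_rcons F : (F \in rcons s Fc) = (F == Fc) || (F \in s) by rewrite mem_rcons inE.
have only_Fc w : w \in U -> w \in Fc ->
    (forall F, F \in rcons s Fc -> w \in F -> F = Fc) ->
    exists2 w, w \in U & free_vertex_in (rcons s Fc) U w.
  move=> wU wFc onlyFc; exists w => //; exists Fc; first by rewrite in_rcons eqxx.
  by move=> F Fs wF; rewrite (onlyFc F Fs wF) subsetIr.
have by_IH : (forall u, u \in U :&: Fc -> exists2 G, G \in s & U :&: Fc \subset G) ->
    exists2 w, w \in U & free_vertex_in (rcons s Fc) U w.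
  move=> UFc; have [|w wU [F0 F0s F0max]] := IH U U0.
    move=> u uU; have [F] := cover u uU; rewrite in_rcons.
    case/orP=> [/eqP-> uFc|]; last by exists F.
    have uUFc : u \in U :&: Fc by rewrite inE uU.
    by have [G Gs /subsetP/(_ u uUFc)] := UFc u uUFc; exists G.
  exists w => //; exists F0; first by rewrite in_rcons F0s orbT.
  move=> F; rewrite in_rcons => /orP[/eqP-> wFc|]; last exact: F0max.
  have wUFc : w \in U :&: Fc by rewrite inE wU.
  have [G Gs UFcG] := UFc w wUFc.
  apply: subset_trans (F0max G Gs (subsetP UFcG w wUFc)).
  by rewrite subsetI subsetIl.
case: (set_0Vmem (U :&: Fc)) => [UFc0|[u0 u0UFc]].
  by apply: by_IH => u; rewrite UFc0 inE.
have [u0U u0Fc] : u0 \in U /\ u0 \in Fc by apply/andP; rewrite -in_setI.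
case: leafFc => [Fs1|[G [GFs GFc] branch]].
  by apply: (only_Fc u0) => // F Fs _; apply/set1P; rewrite -Fs1 inE.
have Gs : G \in s by move: GFs; rewrite inE in_rcons (negPf GFc).
case: (boolP (U :&: Fc \subset G)) => [UFcG|/subsetPn[w wUFc wG]].
  by apply: by_IH => u _; exists G.
have [wU wFc] : w \in U /\ w \in Fc by apply/andP; rewrite -in_setI.
apply: (only_Fc w) => // F Fs wF; apply/eqP; apply: contraNT wG => FFc.
have FFs : F \in [set G in rcons s Fc] by rewrite inE.
have /subsetP/(_ w) := branch F FFs FFc.
by rewrite !inE wF wFc => /(_ isT)/andP[].
Qed.

Definition simplicial_in (P : pred {set 'I_n}) U w :=
  forall A B, A \subset U -> B \subset U -> w \in A -> w \in B -> P A -> P B -> P (A :|: B).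

Lemma quasi_tree_simplicial_vertex D U :
  simplicial_complex D -> quasi_tree D -> U != set0 ->
  exists2 w, w \in U & simplicial_in (fun A => A \in D) U w.
Proof.
move=> [vertD downD] /quasi_tree_leaf_order[s sD leaf] U0.
have [u uU|w wU [F0 /sD F0facet F0max]] := leaf_order_free_vertex leaf U0.
  by have [F /sD FD uF] := face_sub_facet (vertD u); exists F; rewrite // -sub1set.
have F0D : F0 \in D by move: F0facet; rewrite inE => /andP[].
exists w => // A B AU BU wA wB AD BD; apply: (downD F0) => //.
have in_F0 C : C \subset U -> w \in C -> C \in D -> C \subset F0.
  move=> CU wC /face_sub_facet[F /sD FD CF].
  by apply: subset_trans (F0max F FD (subsetP CF w wC)); rewrite subsetI CU.
by rewrite subUset !in_F0.
Qed.

End QuasiTree.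

Section LinearEnumeration.

Variable n : nat.
Implicit Types (A B C U : {set 'I_n}) (s : seq {set 'I_n}).

Definition down_closed (P : pred {set 'I_n}) := forall A B, P A -> B \subset A -> P B.

(* Combinatorial linear quotients: the colon ideal (x_C : C before A) : x_A
   is generated by the x_k such that C :\: A = [set k] for some C before A. *)
Definition linear_quotients_sets s :=
  forall j, (j < size s)%N -> forall B, B \in take j s ->
    exists2 k, k \in B :\: nth set0 s j &
      exists2 C, C \in take j s & C :\: nth set0 s j = [set k].

Definition linear_enumeration U (P : pred {set 'I_n}) e s :=
  [/\ uniq s, (forall A, A \in s <-> [/\ A \subset U, #|A| = e & ~~ P A])
    & linear_quotients_sets s].

Lemma linear_quotients_sets_small s : (size s <= 1)%N -> linear_quotients_sets s.
Proof.
move=> s_le1 [|j] lt_js B; first by rewrite take0.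
by have := leq_trans lt_js s_le1.
Qed.

Lemma linear_quotients_sets_cat s1 s2 :
  linear_quotients_sets s1 -> linear_quotients_sets s2 ->
  (forall A B, A \in s2 -> B \in s1 ->
     exists2 k, k \in B :\: A & exists2 C, C \in s1 & C :\: A = [set k]) ->
  linear_quotients_sets (s1 ++ s2).
Proof.
move=> lq1 lq2 cross j; rewrite size_cat => lt_j B.
have [lt_j1|le_1j] := ltnP j (size s1).
  by rewrite take_cat lt_j1 nth_cat lt_j1; apply: lq1.
have lt_j2 : (j - size s1 < size s2)%N by rewrite ltn_subLR.
rewrite take_cat nth_cat ltnNge le_1j /= mem_cat => /orP[Bs1|Bs2].
  have [k kBA [C Cs1 CA]] := cross _ _ (mem_nth set0 lt_j2) Bs1.
  by exists k => //; exists C; rewrite ?mem_cat ?Cs1.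
have [k kBA [C Cs2 CA]] := lq2 _ lt_j2 _ Bs2.
by exists k => //; exists C; rewrite ?mem_cat ?Cs2 ?orbT.
Qed.

Lemma linear_quotients_sets_setU1 w s : linear_quotients_sets s ->
  (forall B, B \in s -> w \notin B) -> linear_quotients_sets [seq w |: B | B <- s].
Proof.
move=> lq wNs j; rewrite size_map => lt_js B.
rewrite -map_take (nth_map set0) // => /mapP[B0 B0s ->].
have [k kB0 [C0 C0s C0A]] := lq _ lt_js _ B0s.
have [wNB0 wNC0] := (wNs _ (mem_take B0s), wNs _ (mem_take C0s)).
exists k.
  have kw : k != w by apply: contraNneq wNB0 => <-; case/setDP: kB0.
  by move: kB0; rewrite !inE (negPf kw) => /andP[-> ->]; rewrite orbT.
exists (w |: C0); first exact: map_f.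
rewrite -C0A; apply/setP => y; rewrite !inE.
by case: (eqVneq y w) => [->|] /=; rewrite ?(negPf wNC0) ?andbF.
Qed.

Lemma linear_enumeration_card0 U P : exists s, linear_enumeration U P 0 s.
Proof.
have card0 A : #|A| = 0%N <-> A = set0 by split=> [/cards0_eq|->]; rewrite ?cards0.
case P0: (P set0).
  exists [::]; split; [by [] | | exact: linear_quotients_sets_small].
  by move=> A; split=> // -[_ /card0-> ]; rewrite P0.
exists [:: set0]; split; [by [] | | exact: linear_quotients_sets_small].
by move=> A; rewrite inE; split=> [/eqP->|[_ /card0->]]; rewrite ?sub0set ?cards0 ?P0.
Qed.

Lemma linear_enumeration_set0 P e : exists s, linear_enumeration set0 P e.+1 s.
Proof.
exists [::]; split; [by [] | | exact: linear_quotients_sets_small].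
by move=> A; split=> // -[]; rewrite subset0 => /eqP->; rewrite cards0.
Qed.

Lemma simplicial_in_link P U U' w w' :
  simplicial_in P U w -> w \in U -> U' \subset U :\ w ->
  simplicial_in (fun A => P (w |: A)) U' w'.
Proof.
move=> simplP wU U'U A B AU' BU' _ _ PA PB.
have wU_sub C : C \subset U' -> w |: C \subset U.
  move=> CU'; rewrite subUset sub1set wU.
  exact: subset_trans CU' (subset_trans U'U (subD1set U w)).
rewrite setUUr.
by apply: simplP; rewrite ?wU_sub ?setU11.
Qed.

Lemma simplicial_nonface_drop P U w A :
  down_closed P -> simplicial_in P U w -> w \in U -> A \subset U -> ~~ P A ->
  (1 < #|A|)%N -> exists2 x, x \in A & ~~ P (w |: (A :\ x)).
Proof.
move=> downP simplP wU AU PA /card_gt1P[x [y [xA yA xy]]].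
have [Px|] := boolP (P (w |: (A :\ x))); last by exists x.
have [Py|] := boolP (P (w |: (A :\ y))); last by exists y.
have sub_U z : w |: (A :\ z) \subset U.
  by rewrite subUset sub1set wU (subset_trans (subD1set A z) AU).
have := simplP _ _ (sub_U x) (sub_U y) (setU11 _ _) (setU11 _ _) Px Py.
have -> : (w |: (A :\ x)) :|: (w |: (A :\ y)) = w |: A.
  rewrite -setUUr -setDIr; congr (_ :|: _); apply/setP => z; rewrite !inE.
  by case: (eqVneq z x) => [->|]; rewrite ?(negPf xy) ?andbT.
by move/(downP _ A)/(_ (subsetUr _ _)); rewrite (negPf PA).
Qed.

Section LinearEnumerationStep.

Variables (P : pred {set 'I_n}) (U : {set 'I_n}) (w : 'I_n) (e : nat).
Variables t s : seq {set 'I_n}.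
Hypotheses (downP : down_closed P) (wU : w \in U) (simplP : simplicial_in P U w).
Hypothesis tlin : linear_enumeration (U :\ w) (fun A => P (w |: A)) e t.
Hypothesis slin : linear_enumeration (U :\ w) P e.+1 s.

Let wt := [seq w |: B | B <- t].

Let notin_t B : B \in t -> w \notin B.
Proof. by case: tlin => _ memt _ /memt[]; rewrite subsetD1 => /andP[]. Qed.

Let notin_s A : A \in s -> w \notin A.
Proof. by case: slin => _ mems _ /mems[]; rewrite subsetD1 => /andP[]. Qed.

Let step_uniq : uniq (wt ++ s).
Proof.
case: tlin slin => [ut _ _] [us _ _].
have inj_wt : {in t &, injective (fun B => w |: B)}.
  by move=> B C Bt Ct eqBC; rewrite -(setU1K (notin_t Bt)) eqBC setU1K ?notin_t.
rewrite cat_uniq us map_inj_in_uniq // ut andbT /=.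
apply/hasPn => A /notin_s wNA; apply: contra wNA => /mapP[B _ ->]; exact: setU11.
Qed.

Let step_mem A : A \in wt ++ s <-> [/\ A \subset U, #|A| = e.+1 & ~~ P A].
Proof.
case: tlin slin => [_ memt _] [_ mems _]; have UwU := subD1set U w.
rewrite mem_cat; split.
  case/orP=> [/mapP[B Bt ->]|/mems[AU cardA PA]]; last by rewrite (subset_trans AU).
  have [BU cardB PB] := (memt B).1 Bt.
  by rewrite cardsU1 notin_t // cardB subUset sub1set wU (subset_trans BU).
case=> AU cardA PA; have [wA|wNA] := boolP (w \in A); apply/orP; [left|right].
  apply/mapP; exists (A :\ w); last by rewrite setD1K.
  apply/memt; rewrite setSD // setD1K //; split=> //.
  by move: cardA; rewrite (cardsD1 w) wA => -[].
by apply/mems; rewrite subsetD1 AU wNA.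
Qed.

Let step_cross A B : A \in s -> B \in wt ->
  exists2 k, k \in B :\: A & exists2 C, C \in wt & C :\: A = [set k].
Proof.
case: tlin slin => [_ memt _] [_ mems _] As /mapP[B0 B0t ->].
have [AUw cardA PA] := (mems A).1 As; have wNA := notin_s As.
have [x xA PwAx] : exists2 x, x \in A & ~~ P (w |: (A :\ x)).
  case: e cardA (memt B0) => [|e'] cardA memt0; last first.
    apply: (simplicial_nonface_drop (U := U)); rewrite ?cardA //.
    exact: subset_trans AUw (subD1set U w).
  have [x xA] : exists x, x \in A by apply/set0Pn; rewrite -card_gt0 cardA.
  have [_ /cards0_eq B00 PB0] := memt0.1 B0t.
  have Ax0 : A :\ x = set0.
    by apply: cards0_eq; move: cardA; rewrite (cardsD1 x) xA => -[].
  by exists x; rewrite // Ax0 -B00.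
exists w; first by rewrite !inE eqxx (negPf wNA).
exists (w |: (A :\ x)).
  apply: map_f; apply/memt; split=> //; first exact: subset_trans (subD1set A x) AUw.
  by move: cardA; rewrite (cardsD1 x) xA => -[].
apply/setP => z; rewrite !inE; case: (eqVneq z w) => [->|_] /=.
  by rewrite (negPf wNA).
by case: (z \in A); rewrite ?andbF.
Qed.

Lemma linear_enumeration_step : linear_enumeration U P e.+1 (wt ++ s).
Proof.
case: tlin slin => [_ _ lqt] [_ _ lqs]; split; [exact: step_uniq | exact: step_mem |].
by apply: linear_quotients_sets_cat => //; apply: linear_quotients_sets_setU1.
Qed.

End LinearEnumerationStep.

Lemma exists_linear_enumeration P U e : down_closed P ->
  (forall U', U' \subset U -> U' != set0 -> exists2 w, w \in U' & simplicial_in P U' w) ->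
  exists s, linear_enumeration U P e s.
Proof.
move: {2}#|U| (leqnn #|U|) => m; elim: m U P e => [|m IH] U P [|e] le_Um downP simplU;
  try exact: linear_enumeration_card0.
  by move: le_Um; rewrite leqn0 => /eqP/cards0_eq->; apply: linear_enumeration_set0.
have [->|U0] := eqVneq U set0; first exact: linear_enumeration_set0.
have [w wU simplw] := simplU U (subxx U) U0.
have le_Uw : (#|U :\ w| <= m)%N by move: le_Um; rewrite (cardsD1 w) wU.
have [t tlin] : exists t, linear_enumeration (U :\ w) (fun A => P (w |: A)) e t.
  apply: IH => // [A B PwA BA|U' U'U /set0Pn[w' w'U']].
    by apply: downP PwA _; apply: setUS.
  by exists w' => //; apply: simplicial_in_link simplw wU U'U.
have [s slin] : exists s, linear_enumeration (U :\ w) P e.+1 s.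
  by apply: IH => // U' U'U; apply: simplU; apply: subset_trans U'U (subD1set U w).
by eexists; apply: linear_enumeration_step tlin slin.
Qed.

End LinearEnumeration.

Import GRing.Theory.
Local Open Scope ring_scope.

Section IdealMembership.

Variable R : comNzRingType.
Implicit Types (G : seq R) (a b g p q r x : R).

Lemma in_ideal0 G : in_ideal G 0.
Proof.
exists (nseq (size G) 0); rewrite size_nseq; split=> //.
by rewrite big1 // => j _; rewrite nth_nseq if_same mul0r.
Qed.

Lemma in_idealD G p q : in_ideal G p -> in_ideal G q -> in_ideal G (p + q).
Proof.
move=> [c [sc ->]] [c' [sc' ->]].
exists (mkseq (fun j => c`_j + c'`_j) (size G)); rewrite size_mkseq; split=> //.
by rewrite -big_split; apply: eq_bigr => j _; rewrite nth_mkseq // mulrDl.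
Qed.

Lemma in_idealMl G r p : in_ideal G p -> in_ideal G (r * p).
Proof.
move=> [c [sc ->]].
exists (mkseq (fun j => r * c`_j) (size G)); rewrite size_mkseq; split=> //.
by rewrite mulr_sumr; apply: eq_bigr => j _; rewrite nth_mkseq // mulrA.
Qed.

Lemma in_ideal_sum G m (F : 'I_m -> R) :
  (forall j, in_ideal G (F j)) -> in_ideal G (\sum_(j < m) F j).
Proof. by move=> FG; elim/big_ind: _ => //; [apply: in_ideal0 | apply: in_idealD]. Qed.

Lemma in_ideal_mem G x : x \in G -> in_ideal G x.
Proof.
move=> xG; have ltxG : (index x G < size G)%N by rewrite index_mem.
exists (mkseq (fun j => (j == index x G)%:R) (size G)); rewrite size_mkseq; split=> //.
rewrite (bigD1 (Ordinal ltxG)) //= big1 => [|j /eqP neq_j].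
  by rewrite nth_mkseq // eqxx mul1r nth_index ?addr0.
rewrite nth_mkseq // (_ : _ == _ = false) ?mul0r //.
by apply/eqP => eq_j; apply: neq_j; apply: val_inj.
Qed.

Lemma in_ideal_mulr_gens G G' g a : in_ideal G g ->
  (forall x, x \in G -> in_ideal G' (x * a)) -> in_ideal G' (g * a).
Proof.
move=> [c [sc ->]] xaG'; rewrite mulr_suml; apply: in_ideal_sum => j.
by rewrite -mulrA; apply: in_idealMl; apply: xaG'; apply: mem_nth.
Qed.

Lemma in_ideal_rmorph_subM G (f : {rmorphism R -> R}) a b :
  in_ideal G (a - f a) -> in_ideal G (b - f b) -> in_ideal G (a * b - f (a * b)).
Proof.
move=> Ga Gb; rewrite rmorphM.
have -> : a * b - f a * f b = a * (b - f b) + f b * (a - f a) by ring.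
by apply: in_idealD; apply: in_idealMl.
Qed.

Lemma rmorph_in_ideal_eq0 G (f : {rmorphism R -> R}) p :
  (forall x, x \in G -> f x = 0) -> in_ideal G p -> f p = 0.
Proof.
move=> fG0 [c [sc ->]]; rewrite rmorph_sum big1 // => j _.
by rewrite rmorphM (fG0 G`_j) ?mulr0 // mem_nth.
Qed.

End IdealMembership.

Section VariableSubstitution.

Variables (R : comNzRingType) (n : nat).
Implicit Types (V : seq 'I_n) (g : {mpoly R[n]}).

Lemma in_ideal_sub_comp (G : seq {mpoly R[n]}) (lq : n.-tuple {mpoly R[n]}) g :
  (forall i, in_ideal G ('X_i - ('X_i \mPo lq))) -> in_ideal G (g - (g \mPo lq)).
Proof.
move=> GX; pose fixG p := in_ideal G (p - (p \mPo lq)).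
have fixGM p q : fixG p -> fixG q -> fixG (p * q) :=
  @in_ideal_rmorph_subM _ G (comp_mpoly lq) p q.
have fixG1 : fixG 1 by rewrite /fixG rmorph1 subrr; apply: in_ideal0.
have fixGXm m : fixG 'X_[m].
  rewrite mpolyXE_id; apply: big_ind => // i _.
  by elim: (m i) => [|k IHk]; rewrite ?expr0 // exprS; apply: fixGM (GX i) IHk.
elim/mpolyind: g => [|c m p _ _ IHp]; first by rewrite /fixG rmorph0 subr0; apply: in_ideal0.
rewrite /fixG comp_mpolyD opprD addrACA; apply: in_idealD => //.
by rewrite comp_mpolyZ -scalerBr -mul_mpolyC; apply/in_idealMl/fixGXm.
Qed.

Definition kill_vars V : n.-tuple {mpoly R[n]} :=
  [tuple if i \in V then 0 else 'X_i | i < n].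

Lemma comp_kill_varsX V i : 'X_i \mPo kill_vars V = if i \in V then 0 else 'X_i.
Proof. by rewrite comp_mpolyXU -tnth_nth tnth_mktuple. Qed.

Lemma in_ideal_sub_kill_vars V g :
  in_ideal [seq 'X_j | j <- V] (g - (g \mPo kill_vars V)).
Proof.
apply: in_ideal_sub_comp => i; rewrite comp_kill_varsX.
by case: ifP => iV; rewrite ?subr0 ?subrr; [apply/in_ideal_mem/map_f | apply: in_ideal0].
Qed.

Lemma mpolyX_neq0 i : 'X_i != 0 :> {mpoly R[n]}.
Proof.
apply/eqP => /(congr1 (mcoeff U_(i))).
by rewrite mcoeffXU mcoeff0 eqxx => /eqP; rewrite oner_eq0.
Qed.

End VariableSubstitution.

Arguments kill_vars {R n} V.

Section SquarefreeMonomials.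

Variables (K : fieldType) (n : nat).
Implicit Types (A B C : {set 'I_n}) (V : seq 'I_n) (g : {mpoly K[n]}).

Lemma xmon_neq0 A : xmon K A != 0.
Proof. by apply/prodf_neq0 => i _; apply: mpolyX_neq0. Qed.

Lemma xmon_setU1 A k : k \notin A -> 'X_k * xmon K A = xmon K (k |: A).
Proof. by move=> kA; rewrite /xmon big_setU1. Qed.

Lemma xmon_subset C B : C \subset B -> xmon K B = xmon K C * xmon K (B :\: C).
Proof. by move=> CB; rewrite /xmon (big_setID C) /= (setIidPr CB). Qed.

Lemma comp_kill_vars_xmon_id V A : {in V, forall k, k \notin A} ->
  xmon K A \mPo kill_vars V = xmon K A.
Proof.
move=> VA; rewrite /xmon rmorph_prod; apply: eq_bigr => i iA.
rewrite /= comp_kill_varsX.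
by case: ifP => // /VA; rewrite iA.
Qed.

Lemma comp_kill_vars_xmon0 V C k : k \in V -> k \in C -> xmon K C \mPo kill_vars V = 0.
Proof.
by move=> kV kC; rewrite /xmon rmorph_prod (big_setD1 k kC) /= comp_kill_varsX kV mul0r.
Qed.

Lemma colon_xmon (Cs : seq {set 'I_n}) A V :
  (forall k, k \in V -> k \notin A /\ exists2 C, C \in Cs & C \subset k |: A) ->
  (forall C, C \in Cs -> exists2 k, k \in V & k \in C) ->
  forall g, in_ideal [seq xmon K C | C <- Cs] (g * xmon K A) <->
            in_ideal [seq 'X_j | j <- V] g.
Proof.
(* Substituting 0 for the variables of V kills every x_C but not x_A. *)
move=> VA CsV g; split=> [gA|gV].
  have killed : (g \mPo kill_vars V) * xmon K A = 0.
    rewrite -(comp_kill_vars_xmon_id (V := V)) => [|k /VA[] //].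
    rewrite -rmorphM; apply: rmorph_in_ideal_eq0 gA => _ /mapP[C /CsV[k kV kC] ->].
    exact: comp_kill_vars_xmon0 kV kC.
  move/eqP: killed; rewrite mulf_eq0 (negPf (xmon_neq0 A)) orbF => /eqP g0.
  by have := in_ideal_sub_kill_vars V g; rewrite g0 subr0.
apply: (in_ideal_mulr_gens gV) => _ /mapP[k /VA[kA [C CCs CkA]] ->].
rewrite xmon_setU1 // (xmon_subset CkA) mulrC.
by apply/in_idealMl/in_ideal_mem/map_f.
Qed.

Lemma linear_quotients_xmon (s : seq {set 'I_n}) :
  linear_quotients_sets s -> linear_quotients_order [seq xmon K F | F <- s].
Proof.
move=> lq i /andP[_]; rewrite size_map => lt_is; set A := nth set0 s i.
exists [seq k <- enum 'I_n | has (fun C => C :\: A == [set k]) (take i s)] => g.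
rewrite -map_take (nth_map set0) //; apply: colon_xmon => [k|C Cs].
  rewrite mem_filter => /andP[/hasP[C Cs /eqP CA] _].
  have /setDP[_ kA] : k \in C :\: A by rewrite CA set11.
  by split=> //; exists C; rewrite // setUC -subDset CA.
have [k kCA [C' C's C'A]] := lq i lt_is C Cs.
exists k; last by case/setDP: kCA.
by rewrite mem_filter mem_enum andbT; apply/hasP; exists C' => //; apply/eqP.
Qed.

End SquarefreeMonomials.

Theorem theorem4p1 (K : fieldType) (n d l : nat) (D : {set {set 'I_n}}) :
  simplicial_complex D ->
  quasi_tree D ->
  max_face_card D = d ->
  (l < d)%N ->
  (* the minimal monomial generators of I are the x_F, F an (l+1)-subset of
     [n] with F not in D; I has linear quotients: some ordering works *)
  exists s : seq {set 'I_n},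
    [/\ uniq s,
        (forall F : {set 'I_n}, F \in s <-> (#|F| = l.+1 /\ F \notin D)) &
        linear_quotients_order [seq xmon K F | F <- s]].
Proof.
move=> complexD qtD _ _.
have downD : down_closed (fun A => A \in D) by move=> A B; apply: complexD.2.
have [s [uniq_s sD lq_s]] := exists_linear_enumeration l.+1 downD
  (fun U _ U0 => quasi_tree_simplicial_vertex complexD qtD U0) (U := setT).
exists s; split=> //; last exact: linear_quotients_xmon.
by move=> F; rewrite sD subsetT; split=> -[].
Qed.
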